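(* Let $m,n$ be positive integers and $\alpha\in\mathbb{R}$. Consider the scalar equation $\partial_tu+u^m\partial_xu^n=0$, rewritten as $\partial_tu+\partial_x(u^{m+n})-u^n\partial_x(u^m)=0$, with entropy pair $U(u)=u^2/2$, $F(u)=\frac{n}{m+n+1}u^{m+n+1}$, and the semi-discretization on a uniform grid of spacing $\Delta x$ $$\partial_tu_i+\frac{f^{\mathrm{num}}_{i+1/2}-f^{\mathrm{num}}_{i-1/2}}{\Delta x}-\alpha\frac{h^{\mathrm{num}}_{i+1/2}[\![u^m]\!]_{i+1/2}+h^{\mathrm{num}}_{i-1/2}[\![u^m]\!]_{i-1/2}}{2\Delta x}-(1-\alpha)\frac{u_i^n[\![u^m]\!]_{i+1/2}+u_i^n[\![u^m]\!]_{i-1/2}}{2\Delta x}=0,$$ where $h^{\mathrm{num}}\colon\mathbb{R}^2\to\mathbb{R}$ is any symmetric function with $h^{\mathrm{num}}(u,u)=u^n$, subscripts $i+1/2$ mean evaluation at $(u_-,u_+)=(u_i,u_{i+1})$, and $$f^{\mathrm{num}}(u_-,u_+)=\frac{m+1}{m+n+1}\sum_{k=0}^{m+n}u_+^{m+n-k}u_-^k-\alpha\{\{u\}\}h^{\mathrm{num}}\sum_{k=0}^{m-1}u_+^{m-1-k}u_-^k-(1-\alpha)\{\{u^{n+1}\}\}\sum_{k=0}^{m-1}u_+^{m-1-k}u_-^k.$$ Then this semi-discretization is entropy-conservative for $U=u^2/2$.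
   Context: For a function $a$ and states $u_\pm$: $\{\{a\}\}=\tfrac12(a(u_-)+a(u_+))$, $[\![a]\!]=a(u_+)-a(u_-)$. Entropy-conservative for $(U,F)$ means: there exists $F^{\mathrm{num}}\colon\mathbb{R}^2\to\mathbb{R}$ with $F^{\mathrm{num}}(u,u)=F(u)$ such that for all grid states and all $i$, $U'(u_i)\,\partial_tu_i=-\frac{1}{\Delta x}(F^{\mathrm{num}}(u_i,u_{i+1})-F^{\mathrm{num}}(u_{i-1},u_i))$, with $\partial_tu_i$ given by the scheme. *)

From Stdlib Require Import Reals ZArith.
From Coquelicot Require Import Coquelicot.
Open Scope R_scope.

(* jump [[g]] = g(u+) - g(u-) and mean {{g}} = (g(u-) + g(u+))/2 at (u-,u+) = (a,b) *)
Definition jump (g : R -> R) (a b : R) : R := g b - g a.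
Definition mean (g : R -> R) (a b : R) : R := (g a + g b) / 2.

(* sum_{k=0}^{N} b^(N-k) a^k  (sum_f_R0 f N = f 0 + ... + f N) *)
Definition psum (N : nat) (a b : R) : R :=
  sum_f_R0 (fun k => b ^ (N - k) * a ^ k) N.

(* numerical flux f^num(u-,u+) ; uses m >= 1 so that m-1 is the true m-1 *)
Definition fnum (m n : nat) (alpha : R) (h : R -> R -> R) (a b : R) : R :=
  INR (m + 1) / INR (m + n + 1) * psum (m + n) a b
  - alpha * mean (fun v => v) a b * h a b * psum (m - 1) a b
  - (1 - alpha) * mean (fun v => v ^ (n + 1)) a b * psum (m - 1) a b.

Definition scheme_rhs (m n : nat) (alpha : R) (h : R -> R -> R) (dx : R)
    (u : Z -> R) (i : Z) : R :=
  let um := fun v => v ^ m in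
  let ul := u (i - 1)%Z in
  let uc := u i in
  let ur := u (i + 1)%Z in
  - (fnum m n alpha h uc ur - fnum m n alpha h ul uc) / dx
  + alpha * (h uc ur * jump um uc ur + h ul uc * jump um ul uc) / (2 * dx)
  + (1 - alpha) * (uc ^ n * jump um uc ur + uc ^ n * jump um ul uc) / (2 * dx).

Definition entropy_conservative (U F : R -> R) (dudt : (Z -> R) -> Z -> R) (dx : R)
  : Prop :=
  exists Fnum : R -> R -> R,
    (forall v, Fnum v v = F v) /\
    forall (u : Z -> R) (i : Z),
      Derive U (u i) * dudt u i
      = - (1 / dx) * (Fnum (u i) (u (i + 1)%Z) - Fnum (u (i - 1)%Z) (u i)).

From Stdlib Require Import Reals ZArith Lra Lia.
From Coquelicot Require Import Coquelicot.
Open Scope R_scope.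

(* Multiplied by U'(u_i) = u_i, every term of the i-th equation is u_i times a quantity
   attached to one of the two interfaces of cell i.  The entropy flux
     G(a, b) = a f(a, b) - a (alpha h(a, b) + (1 - alpha) a^n) [[u^m]] / 2 - (m+1)/(m+n+1) a^(m+n+1)
   collects the terms seen from the left cell a; the telescoping identity
   (b - a) psum k a b = b^(k+1) - a^(k+1) shows that it also equals
     b f(a, b) + b (alpha h(a, b) + (1 - alpha) b^n) [[u^m]] / 2 - (m+1)/(m+n+1) b^(m+n+1),
   the terms seen from the right cell b, so the entropy update is a flux difference.
   On the diagonal psum k v v = (k+1) v^k, whence f(v, v) = v^(m+n) and
   G(v, v) = n/(m+n+1) v^(m+n+1). *)

Lemma psum_telescope (k : nat) (a b : R) :
  (b - a) * psum k a b = b ^ S k - a ^ S k.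
Proof.
  induction k as [|k IH]; [unfold psum; simpl; ring |].
  assert (Hrec : psum (S k) a b = b * psum k a b + a ^ S k).
  { unfold psum. rewrite tech5, Nat.sub_diag, scal_sum.
    f_equal; [apply sum_eq; intros j Hj | simpl; ring].
    replace (S k - j)%nat with (S (k - j)) by lia. simpl. ring. }
  rewrite Hrec.
  replace ((b - a) * (b * psum k a b + a ^ S k))
    with (b * ((b - a) * psum k a b) + (b - a) * a ^ S k) by ring.
  rewrite IH. simpl. ring.
Qed.

Lemma psum_diag (k : nat) (v : R) : psum k v v = INR (S k) * v ^ k.
Proof.
  unfold psum. transitivity (sum_f_R0 (fun _ => v ^ k) k).
  - apply sum_eq. intros j Hj. rewrite <- pow_add. f_equal. lia.
  - induction k as [|k IH]; [simpl; ring |].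
    rewrite tech5, (S_INR (S k)).
    replace (sum_f_R0 (fun _ => v ^ S k) k) with (v * sum_f_R0 (fun _ => v ^ k) k).
    + rewrite IH. simpl. ring.
    + rewrite scal_sum. apply sum_eq. intros. simpl. ring.
Qed.

Section EntropyFlux.

Variables (m n : nat) (alpha : R) (h : R -> R -> R).
Hypothesis m_gt0 : (0 < m)%nat.

Let Nmn : R := INR (m + n + 1).

Lemma Nmn_neq0 : Nmn <> 0.
Proof. unfold Nmn. apply not_0_INR. lia. Qed.

Lemma fnum_diag (v : R) : h v v = v ^ n -> fnum m n alpha h v v = v ^ (m + n).
Proof.
  intros hvv. unfold fnum, mean. rewrite hvv, !psum_diag.
  destruct m as [|k]; [lia |]. replace (S k - 1)%nat with k by lia.
  repeat rewrite ?plus_INR, ?S_INR.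
  rewrite !pow_add, ?INR_0, pow_1, <- tech_pow_Rmult.
  assert (Hk := pos_INR k). assert (Hn := pos_INR n). field. lra.
Qed.

Lemma fnum_telescope (a b : R) :
  (b - a) * fnum m n alpha h a b =
  INR (m + 1) / Nmn * (b ^ (m + n + 1) - a ^ (m + n + 1))
  - alpha * ((a + b) / 2) * h a b * (b ^ m - a ^ m)
  - (1 - alpha) * ((a * a ^ n + b * b ^ n) / 2) * (b ^ m - a ^ m).
Proof.
  unfold fnum, mean. fold Nmn.
  assert (Htel_m := psum_telescope (m - 1) a b).
  assert (Htel_mn := psum_telescope (m + n) a b).
  replace (S (m - 1)) with m in Htel_m by lia.
  replace (S (m + n)) with (m + n + 1)%nat in Htel_mn by lia.
  rewrite <- Htel_m, <- Htel_mn, !pow_add, !pow_1. field. exact Nmn_neq0.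
Qed.

Definition entropy_flux (a b : R) : R :=
  a * fnum m n alpha h a b
  - a * (alpha * h a b + (1 - alpha) * a ^ n) * jump (fun v => v ^ m) a b / 2
  - INR (m + 1) / Nmn * a ^ (m + n + 1).

Lemma entropy_flux_rightE (a b : R) :
  entropy_flux a b =
  b * fnum m n alpha h a b
  + b * (alpha * h a b + (1 - alpha) * b ^ n) * jump (fun v => v ^ m) a b / 2
  - INR (m + 1) / Nmn * b ^ (m + n + 1).
Proof.
  unfold entropy_flux, jump.
  replace (b * fnum m n alpha h a b)
    with (a * fnum m n alpha h a b + (b - a) * fnum m n alpha h a b) by ring.
  rewrite fnum_telescope. field. exact Nmn_neq0.
Qed.

Lemma entropy_flux_diag (v : R) :
  h v v = v ^ n -> entropy_flux v v = INR n / Nmn * v ^ (m + n + 1).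
Proof.
  intros hvv. unfold entropy_flux, jump, Nmn. rewrite fnum_diag by exact hvv.
  repeat rewrite ?plus_INR, ?S_INR. rewrite !pow_add, ?INR_0, pow_1.
  assert (Hm := pos_INR m). assert (Hn := pos_INR n). field. lra.
Qed.

End EntropyFlux.

Lemma Derive_half_square (x : R) : Derive (fun v => v ^ 2 / 2) x = x.
Proof. apply is_derive_unique. auto_derive; [exact I | field]. Qed.

Theorem mainTheorem8 (m n : nat) (alpha dx : R) (h : R -> R -> R) :
  (0 < m)%nat -> (0 < n)%nat -> 0 < dx ->
  (forall a b, h a b = h b a) ->
  (forall a, h a a = a ^ n) ->
  entropy_conservative (fun v => v ^ 2 / 2)
    (fun v => INR n / INR (m + n + 1) * v ^ (m + n + 1))
    (scheme_rhs m n alpha h dx) dx.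
Proof.
  intros m_gt0 _ dx_gt0 _ h_diag.
  exists (entropy_flux m n alpha h). split.
  - intros v. exact (entropy_flux_diag m n alpha h m_gt0 v (h_diag v)).
  - intros u i. rewrite Derive_half_square.
    unfold scheme_rhs.
    set (a := u (i - 1)%Z). set (c := u i). set (b := u (i + 1)%Z).
    rewrite (entropy_flux_rightE m n alpha h m_gt0 a c).
    unfold entropy_flux, jump. field. split; [apply not_0_INR; lia | lra].
Qed.
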